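(* Assume the setting below. There exists a constant $C\geq 0$, depending only on $T$ and $C_0$, such that $$|\widehat v(t_n,x)-\widehat v(t_n,y)|\leq L C|x-y|$$ for all $x,y\in\mathbb R^d$ and all $n=0,\ldots,N$.
   Context: Let $T>0$, $d,p,q\ge1$, let $A\subseteq\mathbb R^q$ be a compact subset of a separable metric space, and let $\mu:[0,T]\times\mathbb R^d\times A\to\mathbb R^d$, $\sigma:[0,T]\times\mathbb R^d\times A\to\mathbb R^{d\times p}$ be continuous with $|\mu(t,x,a)-\mu(s,y,a)|+\|\sigma(t,x,a)-\sigma(s,y,a)\|\leq C_0(|x-y|+|t-s|^{1/2})$ for all $t,s\in[0,T]$, $x,y\in\mathbb R^d$, $a\in A$. Let $\psi:\mathbb R^d\to\mathbb R$ be continuous with $|\psi(x)-\psi(y)|\le L|x-y|$. Let $N\ge1$, $h=T/N$, $t_n=nh$. Let $M\ge2$ and let $(\hat\lambda_i,\hat\xi_i)_{i=1,\ldots,\hat M}$ with $\hat\lambda_i\ge0$, $\hat\xi_i\in\mathbb R^p$ be a cubature rule that integrates exactly, with respect to the standard Gaussian measure $\mathcal N(0,I_p)$ on $\mathbb R^p$, all polynomials of degree $\le 2M-1$ (e.g. the tensor product of the $M$-point Gauss–Hermite rule); in particular $\sum_i\hat\lambda_i=1$, $\sum_i\hat\lambda_i\hat\xi_i=0$, $\sum_i\hat\lambda_i\hat\xi_i\hat\xi_i^\top=I_p$. Define $\widehat v(t_N,x)=\psi(x)$ and, for $n=N-1,\ldots,0$, $\widehat v(t_n,x)=\sup_{a\in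 A}\sum_{i=1}^{\hat M}\hat\lambda_i\,\widehat v\big(t_{n+1},x+\mu(t_n,x,a)h+\sqrt h\,\sigma(t_n,x,a)\hat\xi_i\big)$. *)

From HB Require Import structures.
From mathcomp Require Import all_boot all_order all_algebra.
From mathcomp Require Import all_classical all_reals all_analysis.
Set Implicit Arguments. Unset Strict Implicit. Unset Printing Implicit Defensive.
Import Order.TTheory GRing.Theory Num.Theory.
Import numFieldNormedType.Exports.
Local Open Scope classical_set_scope.
Local Open Scope ring_scope.

Definition enorm (R : realType) (n : nat) (x : 'cV[R]_n) : R :=
  Num.sqrt (\sum_(i < n) (x i 0) ^+ 2).

Definition fnorm (R : realType) (m n : nat) (S : 'M[R]_(m, n)) : R :=
  Num.sqrt (\sum_(i < m) \sum_(j < n) (S i j) ^+ 2).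

(* moments of the standard 1-d Gaussian: E[Z^k] = 0 for k odd, (k-1)!! for k even *)
Definition gauss_moment (R : realType) (k : nat) : R :=
  if odd k then 0 else (\prod_(i < k./2) (2 * i + 1))%:R.

(* (lam, xi) with Mhat nodes integrates exactly w.r.t. N(0, I_p) all polynomials
   of degree <= deg : by linearity, this means exactness on all monomials
   prod_j z_j^(alpha j) with |alpha| <= deg, whose Gaussian integral is
   prod_j E[Z^(alpha j)]. *)
Definition gauss_cubature (R : realType) (p Mhat deg : nat)
    (lam : 'I_Mhat -> R) (xi : 'I_Mhat -> 'cV[R]_p) : Prop :=
  (forall i, 0 <= lam i) /\
  forall alpha : 'I_p -> nat, (\sum_(j < p) alpha j <= deg)%N ->
    \sum_(i < Mhat) lam i * \prod_(j < p) (xi i j 0) ^+ (alpha j)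
    = \prod_(j < p) gauss_moment R (alpha j).

(* Backward scheme: vhat_rem k = \widehat v(t_{N-k}, .) (k steps remaining). *)
Fixpoint vhat_rem (R : realType) (d p q : nat) (T : R) (N : nat)
    (A : set 'cV[R]_q)
    (mu : R -> 'cV[R]_d -> 'cV[R]_q -> 'cV[R]_d)
    (sigma : R -> 'cV[R]_d -> 'cV[R]_q -> 'M[R]_(d, p))
    (psi : 'cV[R]_d -> R) (Mhat : nat)
    (lam : 'I_Mhat -> R) (xi : 'I_Mhat -> 'cV[R]_p) (k : nat) : 'cV[R]_d -> R :=
  match k with
  | 0 => psi
  | k'.+1 => fun x =>
      let h := T / N%:R in
      let t := (N - k)%:R * h in
      sup [set v | exists2 a, A a &
             v = \sum_(i < Mhat) lam i *
                   vhat_rem T N A mu sigma psi lam xi k'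
                     (x + h *: mu t x a + Num.sqrt h *: (sigma t x a *m xi i))]
  end.

Definition vhat (R : realType) (d p q : nat) (T : R) (N : nat)
    (A : set 'cV[R]_q)
    (mu : R -> 'cV[R]_d -> 'cV[R]_q -> 'cV[R]_d)
    (sigma : R -> 'cV[R]_d -> 'cV[R]_q -> 'M[R]_(d, p))
    (psi : 'cV[R]_d -> R) (Mhat : nat)
    (lam : 'I_Mhat -> R) (xi : 'I_Mhat -> 'cV[R]_p) (n : nat) : 'cV[R]_d -> R :=
  vhat_rem T N A mu sigma psi lam xi (N - n).

From HB Require Import structures.
From mathcomp Require Import all_boot all_order all_algebra.
From mathcomp Require Import all_classical all_reals all_analysis.
From mathcomp Require Import ring lra zify.
Set Implicit Arguments. Unset Strict Implicit. Unset Printing Implicit Defensive.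
Import Order.TTheory GRing.Theory Num.Theory.
Import numFieldNormedType.Exports.
Local Open Scope classical_set_scope.
Local Open Scope ring_scope.

(* One backward step of the scheme turns a K-Lipschitz function into a
   K sqrt(1 + c h)-Lipschitz one.  The supremum over controls is 1-Lipschitz for
   the sup distance, so it suffices to fix the control.  Since the cubature
   reproduces the Gaussian moments of order <= 2, the squared distance between
   the two one-step images of x and y averages exactly to
   |x - y + h (mu x - mu y)|^2 + h |sigma x - sigma y|_F^2 <= (1 + c h) |x - y|^2,
   and Jensen's inequality bounds the mean distance by its square root.  After at
   most N steps with h = T / N the constant is (1 + c h)^(N/2) <= exp (c T). *)

Lemma weighted_sum_le_sqrt (R : realType) n (lam e : 'I_n -> R) :
  (forall i, 0 <= lam i) -> \sum_(i < n) lam i = 1 ->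
  \sum_(i < n) lam i * e i <= Num.sqrt (\sum_(i < n) lam i * e i ^+ 2).
Proof.
move=> lam_ge0 lam_sum1.
have var_expand c : \sum_(i < n) lam i * (e i - c) ^+ 2 =
    \sum_(i < n) lam i * e i ^+ 2 - 2 * c * \sum_(i < n) lam i * e i
    + c ^+ 2 * \sum_(i < n) lam i.
  by rewrite !mulr_sumr -sumrB -big_split /=; apply: eq_bigr => i _; ring.
have := var_expand (\sum_(i < n) lam i * e i); rewrite lam_sum1.
set m := \sum_(i < n) lam i * e i => var_m.
have var_ge0 : 0 <= \sum_(i < n) lam i * (e i - m) ^+ 2.
  by apply: sumr_ge0 => i _; rewrite mulr_ge0 ?sqr_ge0.
rewrite var_m in var_ge0.
apply: le_trans (ler_norm m) _; rewrite -sqrtr_sqr ler_sqrt; nra.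
Qed.

Lemma sqrt1D_expn_le_expR (R : realType) (a : R) n :
  0 <= a -> Num.sqrt (1 + a) ^+ n <= expR (a * n%:R).
Proof.
move=> a_ge0.
have r_ge1 : 1 <= Num.sqrt (1 + a) by rewrite -{1}sqrtr1 ler_sqrt; lra.
have r_le : Num.sqrt (1 + a) <= 1 + a.
  have r_sqr : Num.sqrt (1 + a) ^+ 2 = 1 + a by rewrite sqr_sqrtr //; lra.
  by rewrite -{2}r_sqr; move: r_ge1; set r := Num.sqrt _; nra.
rewrite expRM_natr; apply: lerXn2r; rewrite ?nnegrE ?expR_ge0 ?sqrtr_ge0 //.
exact: le_trans r_le (expR_ge1Dx a).
Qed.

Section SupLipschitz.
Variables (R : realType) (I : Type) (P : set I).

Lemma sup_image_leD (f g : I -> R) (K : R) :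
  (forall a, P a -> f a <= g a + K) ->
  has_sup [set v | exists2 a, P a & v = g a] ->
  has_sup [set v | exists2 a, P a & v = f a] /\
  sup [set v | exists2 a, P a & v = f a] <= sup [set v | exists2 a, P a & v = g a] + K.
Proof.
move=> f_le g_sup; set sg := sup [set v | exists2 a, P a & v = g a].
have f_ub : ubound [set v | exists2 a, P a & v = f a] (sg + K).
  move=> _ [a Pa ->]; apply: le_trans (f_le a Pa) _; rewrite lerD2r.
  by apply: (sup_upper_bound g_sup); exists a.
have f_ne : [set v | exists2 a, P a & v = f a] !=set0.
  by case: g_sup => -[_ [a Pa _]] _; exists (f a), a.
by split; [split=> //; exists (sg + K) | exact: ge_sup].
Qed.

Lemma sup_image_dist_le (f g : I -> R) (K : R) :
  0 <= K -> (forall a, P a -> `|f a - g a| <= K) ->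
  `|sup [set v | exists2 a, P a & v = f a] - sup [set v | exists2 a, P a & v = g a]| <= K.
Proof.
move=> K_ge0 fg_le.
have f_le a : P a -> f a <= g a + K.
  by move=> /fg_le; rewrite ler_norml => /andP[_]; lra.
have g_le a : P a -> g a <= f a + K.
  by move=> /fg_le; rewrite ler_norml => /andP[+ _]; lra.
have [g_sup|g_nosup] := pselect (has_sup [set v | exists2 a, P a & v = g a]).
  have [f_sup f_sup_le] := sup_image_leD f_le g_sup.
  have [_ g_sup_le] := sup_image_leD g_le f_sup.
  by rewrite ler_norml; apply/andP; split; lra.
have [f_sup|f_nosup] := pselect (has_sup [set v | exists2 a, P a & v = f a]).
  by have [] := sup_image_leD g_le f_sup.
by rewrite !sup_out // subrr normr0.
Qed.

End SupLipschitz.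

Lemma enorm_ge0 (R : realType) d (v : 'cV[R]_d) : 0 <= enorm v.
Proof. exact: sqrtr_ge0. Qed.

Lemma fnorm_ge0 (R : realType) m n (S : 'M[R]_(m, n)) : 0 <= fnorm S.
Proof. exact: sqrtr_ge0. Qed.

Lemma enorm_sqr (R : realType) d (v : 'cV[R]_d) :
  enorm v ^+ 2 = \sum_(k < d) v k 0 ^+ 2.
Proof. by rewrite sqr_sqrtr // sumr_ge0 // => k _; rewrite sqr_ge0. Qed.

Lemma fnorm_sqr (R : realType) m n (S : 'M[R]_(m, n)) :
  fnorm S ^+ 2 = \sum_(k < m) \sum_(j < n) S k j ^+ 2.
Proof.
by rewrite sqr_sqrtr // sumr_ge0 // => k _; rewrite sumr_ge0 // => j _; rewrite sqr_ge0.
Qed.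

Lemma enorm_gt0_const1 (R : realType) d : (0 < d)%N -> 0 < enorm (const_mx 1 : 'cV[R]_d).
Proof.
move=> d_gt0; rewrite sqrtr_gt0 (eq_bigr (fun _ => 1)) => [|k _]; last by rewrite mxE expr1n.
by rewrite sumr_const card_ord ltr0n.
Qed.

Lemma lipschitz_ge0 (R : realType) d (f : 'cV[R]_d -> R) (L : R) :
  (0 < d)%N -> (forall x y, `|f x - f y| <= L * enorm (x - y)) -> 0 <= L.
Proof.
move=> d_gt0 f_lip; have := f_lip (const_mx 1) 0; rewrite subr0.
have := enorm_gt0_const1 R d_gt0; have := normr_ge0 (f (const_mx 1) - f 0); nra.
Qed.

Lemma enormDZ_sqr_le (R : realType) d (a b : 'cV[R]_d) (h : R) : 0 <= h ->
  enorm (a + h *: b) ^+ 2 <= (1 + h) * enorm a ^+ 2 + (h + h ^+ 2) * enorm b ^+ 2.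
Proof.
move=> h_ge0; rewrite !enorm_sqr !mulr_sumr -big_split /=; apply: ler_sum => k _.
rewrite !mxE; have := mulr_ge0 h_ge0 (sqr_ge0 (a k 0 - b k 0)); nra.
Qed.

Lemma euler_step_sub (R : realType) d p (x y mx my : 'cV[R]_d) (Sx Sy : 'M[R]_(d, p))
    (w : 'cV[R]_p) (h s : R) :
  (x + h *: mx + s *: (Sx *m w)) - (y + h *: my + s *: (Sy *m w)) =
  (x - y) + h *: (mx - my) + s *: ((Sx - Sy) *m w).
Proof. by rewrite mulmxBl; apply/matrixP => i j; rewrite !mxE; ring. Qed.

Section CubatureMoments.
Variables (R : realType) (p Mh : nat) (lam : 'I_Mh -> R) (xi : 'I_Mh -> 'cV[R]_p).

Lemma gauss_cubature_le deg deg' :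
  (deg' <= deg)%N -> gauss_cubature deg lam xi -> gauss_cubature deg' lam xi.
Proof. by move=> le_deg [lam_ge0 exact_deg]; split=> // alpha /leq_trans; auto. Qed.

Lemma prod_expr_eqb (x : 'I_p -> R) j0 : \prod_(j < p) x j ^+ (j == j0) = x j0.
Proof. by rewrite (bigD1 j0) //= eqxx expr1 big1 ?mulr1 // => j /negbTE ->. Qed.

Lemma sum_eqb j0 : (\sum_(j < p) (j == j0) = 1)%N.
Proof. by rewrite (bigD1 j0) //= eqxx big1 // => j /negbTE ->. Qed.

Hypothesis cub : gauss_cubature 2 lam xi.

Lemma cubature_weight_ge0 i : 0 <= lam i.
Proof. exact: cub.1. Qed.

Lemma cubature_mass : \sum_(i < Mh) lam i = 1.
Proof.
have := cub.2 (fun _ => 0%N) ltac:(by rewrite big1).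
rewrite [X in _ = X -> _]big1 => [<-|j _]; last by rewrite /gauss_moment /= big_ord0.
by rewrite [RHS](eq_bigr lam) // => i _; rewrite big1 ?mulr1.
Qed.

Lemma cubature_mean j : \sum_(i < Mh) lam i * xi i j 0 = 0.
Proof.
have := cub.2 (fun j' => nat_of_bool (j' == j)); rewrite sum_eqb => /(_ isT).
rewrite (bigD1 j) //= eqxx /gauss_moment /= mul0r => moment1.
by rewrite -[RHS]moment1; apply: eq_bigr => i _; rewrite prod_expr_eqb.
Qed.

Lemma cubature_covariance j1 j2 :
  \sum_(i < Mh) lam i * (xi i j1 0 * xi i j2 0) = (j1 == j2)%:R.
Proof.
have := cub.2 (fun j => ((j == j1) + (j == j2))%N).
rewrite big_split /= !sum_eqb => /(_ isT) moment2.
have -> : \sum_(i < Mh) lam i * (xi i j1 0 * xi i j2 0) =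
    \sum_(i < Mh) lam i * \prod_(j < p) xi i j 0 ^+ ((j == j1) + (j == j2)).
  apply: eq_bigr => i _; under eq_bigr do rewrite exprD.
  by rewrite big_split /= !prod_expr_eqb.
rewrite moment2 (bigD1 j1) //= eqxx; case: eqP => [<-|_]; last first.
  by rewrite /gauss_moment /= mul0r.
rewrite /gauss_moment /= big_ord1 mul1r big1 // => j /negbTE ->.
by rewrite /= big_ord0.
Qed.

Lemma cubature_linear_mean (w : 'I_p -> R) :
  \sum_(i < Mh) lam i * \sum_(j < p) w j * xi i j 0 = 0.
Proof.
under eq_bigr do rewrite mulr_sumr.
rewrite exchange_big big1 //= => j _.
under eq_bigr do rewrite mulrCA.
by rewrite -mulr_sumr cubature_mean mulr0.
Qed.

Lemma cubature_linear_sqr (w : 'I_p -> R) :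
  \sum_(i < Mh) lam i * (\sum_(j < p) w j * xi i j 0) ^+ 2 = \sum_(j < p) w j ^+ 2.
Proof.
under eq_bigr do rewrite expr2 mulr_suml mulr_sumr.
under eq_bigr do under eq_bigr do rewrite mulr_sumr mulr_sumr.
rewrite exchange_big /=; apply: eq_bigr => j _; rewrite exchange_big /=.
have cross j' : \sum_(i < Mh) lam i * (w j * xi i j 0 * (w j' * xi i j' 0)) =
    w j * w j' * (j == j')%:R.
  by rewrite -cubature_covariance mulr_sumr; apply: eq_bigr => i _; ring.
under eq_bigr do rewrite cross.
rewrite (bigD1 j) //= eqxx mulr1 big1 ?addr0 // => j' /negbTE.
by rewrite eq_sym => ->; rewrite mulr0.
Qed.

Lemma cubature_affine_sqr (c s : R) (w : 'I_p -> R) :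
  \sum_(i < Mh) lam i * (c + s * \sum_(j < p) w j * xi i j 0) ^+ 2 =
  c ^+ 2 + s ^+ 2 * \sum_(j < p) w j ^+ 2.
Proof.
transitivity (c ^+ 2 * \sum_(i < Mh) lam i
    + 2 * c * s * \sum_(i < Mh) lam i * \sum_(j < p) w j * xi i j 0
    + s ^+ 2 * \sum_(i < Mh) lam i * (\sum_(j < p) w j * xi i j 0) ^+ 2).
  by rewrite !mulr_sumr -!big_split /=; apply: eq_bigr => i _; ring.
by rewrite cubature_mass cubature_linear_mean cubature_linear_sqr; ring.
Qed.

Lemma cubature_sqr_enorm d (u : 'cV[R]_d) (S : 'M[R]_(d, p)) (s : R) :
  \sum_(i < Mh) lam i * enorm (u + s *: (S *m xi i)) ^+ 2 =
  enorm u ^+ 2 + s ^+ 2 * fnorm S ^+ 2.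
Proof.
rewrite enorm_sqr fnorm_sqr mulr_sumr.
under eq_bigr do rewrite enorm_sqr mulr_sumr.
rewrite exchange_big -big_split /=; apply: eq_bigr => k _.
by rewrite -cubature_affine_sqr; apply: eq_bigr => i _; rewrite !mxE.
Qed.

End CubatureMoments.

Lemma cubature_step_sqr_dist (R : realType) d p Mh (lam : 'I_Mh -> R) (xi : 'I_Mh -> 'cV[R]_p)
    (x y mx my : 'cV[R]_d) (Sx Sy : 'M[R]_(d, p)) (h : R) :
  gauss_cubature 2 lam xi -> 0 <= h ->
  \sum_(i < Mh) lam i * enorm ((x + h *: mx + Num.sqrt h *: (Sx *m xi i))
                               - (y + h *: my + Num.sqrt h *: (Sy *m xi i))) ^+ 2
  <= (1 + h) * enorm (x - y) ^+ 2 + (h + h ^+ 2) * enorm (mx - my) ^+ 2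
     + h * fnorm (Sx - Sy) ^+ 2.
Proof.
move=> cub h_ge0; under eq_bigr do rewrite euler_step_sub.
by rewrite cubature_sqr_enorm // (sqr_sqrtr h_ge0) lerD2r enormDZ_sqr_le.
Qed.

(* For [h <= T], [1 + h + (h + h^2) C0^2 + h C0^2 <= 1 + step_growth C0 T * h]. *)
Definition step_growth (R : realType) (C0 T : R) : R := 1 + 2 * C0 ^+ 2 + T * C0 ^+ 2.

Lemma step_growth_le (R : realType) (C0 T h m f e : R) :
  0 <= h <= T -> 0 <= m -> 0 <= f -> 0 <= e -> m + f <= C0 * e ->
  (1 + h) * e ^+ 2 + (h + h ^+ 2) * m ^+ 2 + h * f ^+ 2
  <= (1 + step_growth C0 T * h) * e ^+ 2.
Proof.
move=> /andP[h_ge0 h_leT] m_ge0 f_ge0 e_ge0 mf_le.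
have m_sqr : m ^+ 2 <= C0 ^+ 2 * e ^+ 2 by nra.
have f_sqr : f ^+ 2 <= C0 ^+ 2 * e ^+ 2 by nra.
have hm : h * m ^+ 2 <= h * (C0 ^+ 2 * e ^+ 2) by exact: ler_wpM2l.
have hhm : h ^+ 2 * m ^+ 2 <= h ^+ 2 * (C0 ^+ 2 * e ^+ 2) by apply: ler_wpM2l; rewrite ?sqr_ge0.
have hf : h * f ^+ 2 <= h * (C0 ^+ 2 * e ^+ 2) by exact: ler_wpM2l.
have hT : h ^+ 2 * (C0 ^+ 2 * e ^+ 2) <= h * T * (C0 ^+ 2 * e ^+ 2).
  by rewrite expr2; apply: ler_wpM2r; [rewrite mulr_ge0 ?sqr_ge0 | exact: ler_wpM2l].
rewrite /step_growth; nra.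
Qed.

Lemma cubature_step_lipschitz (R : realType) d p Mh (lam : 'I_Mh -> R) (xi : 'I_Mh -> 'cV[R]_p)
    (C0 T : R) (Q : Type) (A : set Q)
    (b : 'cV[R]_d -> Q -> 'cV[R]_d) (S : 'cV[R]_d -> Q -> 'M[R]_(d, p))
    (V : 'cV[R]_d -> R) (K h : R) :
  gauss_cubature 2 lam xi -> 0 <= K -> 0 <= h <= T ->
  (forall a x y, A a -> enorm (b x a - b y a) + fnorm (S x a - S y a) <= C0 * enorm (x - y)) ->
  (forall x y, `|V x - V y| <= K * enorm (x - y)) ->
  forall x y,
  `|sup [set v | exists2 a, A a &
          v = \sum_(i < Mh) lam i * V (x + h *: b x a + Num.sqrt h *: (S x a *m xi i))]
    - sup [set v | exists2 a, A a &
          v = \sum_(i < Mh) lam i * V (y + h *: b y a + Num.sqrt h *: (S y a *m xi i))]|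
  <= K * Num.sqrt (1 + step_growth C0 T * h) * enorm (x - y).
Proof.
move=> cub K_ge0 /andP[h_ge0 h_leT] bS_lip V_lip x y.
apply: sup_image_dist_le => [|a Aa].
  by rewrite !mulr_ge0 ?sqrtr_ge0 ?enorm_ge0.
pose X z i := z + h *: b z a + Num.sqrt h *: (S z a *m xi i).
have mean_dist : \sum_(i < Mh) lam i * enorm (X x i - X y i)
    <= Num.sqrt (1 + step_growth C0 T * h) * enorm (x - y).
  apply: le_trans (weighted_sum_le_sqrt _ (cubature_weight_ge0 cub) (cubature_mass cub)) _.
  have growth_ge0 : 0 <= 1 + step_growth C0 T * h.
    have T_ge0 := le_trans h_ge0 h_leT.
    by rewrite addr_ge0 // mulr_ge0 // /step_growth; have := sqr_ge0 C0; nra.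
  rewrite -(ger0_norm (enorm_ge0 (x - y))) -sqrtr_sqr -sqrtrM //.
  rewrite ler_sqrt; last by rewrite mulr_ge0 ?sqr_ge0.
  apply: le_trans (cubature_step_sqr_dist _ _ _ _ _ _ cub h_ge0) _.
  apply: step_growth_le; rewrite ?enorm_ge0 ?fnorm_ge0 ?h_ge0 //.
  exact: bS_lip.
rewrite -sumrB; under eq_bigr do rewrite -mulrBr.
apply: le_trans (ler_norm_sum _ _ _) _.
apply: le_trans (_ : _ <= K * \sum_(i < Mh) lam i * enorm (X x i - X y i)) _.
  rewrite mulr_sumr; apply: ler_sum => i _.
  rewrite normrM ger0_norm ?(cubature_weight_ge0 cub) // mulrCA.
  by apply: ler_wpM2l; [exact: (cubature_weight_ge0 cub) | exact: V_lip].
by rewrite -mulrA; exact: ler_wpM2l.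
Qed.

Lemma vhat_rem_lipschitz (R : realType) (T C0 : R) d p q (A : set 'cV[R]_q)
    (mu : R -> 'cV[R]_d -> 'cV[R]_q -> 'cV[R]_d)
    (sigma : R -> 'cV[R]_d -> 'cV[R]_q -> 'M[R]_(d, p))
    (psi : 'cV[R]_d -> R) (L : R) N Mh (lam : 'I_Mh -> R) (xi : 'I_Mh -> 'cV[R]_p) :
  0 <= T -> 0 <= L -> gauss_cubature 2 lam xi ->
  (forall t x y a, 0 <= t <= T -> A a ->
     enorm (mu t x a - mu t y a) + fnorm (sigma t x a - sigma t y a) <= C0 * enorm (x - y)) ->
  (forall x y, `|psi x - psi y| <= L * enorm (x - y)) ->
  forall k, (k <= N)%N -> forall x y,
  `|vhat_rem T N A mu sigma psi lam xi k x - vhat_rem T N A mu sigma psi lam xi k y|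
    <= L * Num.sqrt (1 + step_growth C0 T * (T / N%:R)) ^+ k * enorm (x - y).
Proof.
move=> T_ge0 L_ge0 cub mu_sigma_lip psi_lip; set h := T / N%:R.
elim=> [|k IH] kN x y; first by rewrite expr0 mulr1; exact: psi_lip.
have N_gt0 : (0 < N)%N by apply: leq_trans kN.
have h_ge0 : 0 <= h by rewrite divr_ge0.
have Nh : N%:R * h = T by rewrite /h mulrC divfK // pnatr_eq0 -lt0n.
have t_in : 0 <= (N - k.+1)%:R * h <= T.
  by rewrite mulr_ge0 //= -[X in _ <= X]Nh ler_wpM2r // ler_nat leq_subr.
have h_in : 0 <= h <= T.
  by rewrite h_ge0 /= -[X in _ <= X]Nh ler_peMl // ler1n.
rewrite exprSr mulrA; cbn [vhat_rem]; rewrite -/h.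
apply: (cubature_step_lipschitz (b := fun z a => mu ((N - k.+1)%:R * h) z a)
                                (S := fun z a => sigma ((N - k.+1)%:R * h) z a)) => //.
- by rewrite mulr_ge0 // exprn_ge0 // sqrtr_ge0.
- by move=> a x' y' Aa; exact: mu_sigma_lip.
- exact: IH (ltnW kN).
Qed.

Theorem proposition3p3 (R : realType) (T C0 : R) :
  0 < T ->
  exists C : R, 0 <= C /\
  forall (d p q : nat) (A : set 'cV[R]_q)
    (mu : R -> 'cV[R]_d -> 'cV[R]_q -> 'cV[R]_d)
    (sigma : R -> 'cV[R]_d -> 'cV[R]_q -> 'M[R]_(d, p))
    (psi : 'cV[R]_d -> R) (L : R) (N M Mhat : nat)
    (lam : 'I_Mhat -> R) (xi : 'I_Mhat -> 'cV[R]_p),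
  (1 <= d)%N -> (1 <= p)%N -> (1 <= q)%N ->
  compact A ->
  {within [set z : R * 'cV[R]_d * 'cV[R]_q | 0 <= z.1.1 <= T /\ A z.2],
     continuous (fun z : R * 'cV[R]_d * 'cV[R]_q => mu z.1.1 z.1.2 z.2)} ->
  {within [set z : R * 'cV[R]_d * 'cV[R]_q | 0 <= z.1.1 <= T /\ A z.2],
     continuous (fun z : R * 'cV[R]_d * 'cV[R]_q => sigma z.1.1 z.1.2 z.2)} ->
  (forall t s x y a, 0 <= t <= T -> 0 <= s <= T -> A a ->
     enorm (mu t x a - mu s y a) + fnorm (sigma t x a - sigma s y a)
       <= C0 * (enorm (x - y) + Num.sqrt `|t - s|)) ->
  continuous psi ->
  (forall x y, `|psi x - psi y| <= L * enorm (x - y)) ->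
  (1 <= N)%N -> (2 <= M)%N ->
  gauss_cubature (2 * M - 1) lam xi ->
  forall (n : nat) (x y : 'cV[R]_d), (n <= N)%N ->
    `|vhat T N A mu sigma psi lam xi n x - vhat T N A mu sigma psi lam xi n y|
      <= L * C * enorm (x - y).
Proof.
move=> T_gt0; set c := step_growth C0 T.
have c_ge0 : 0 <= c by rewrite /c /step_growth; have := sqr_ge0 C0; nra.
exists (expR (c * T)); split; first exact: expR_ge0.
move=> d p q A mu sigma psi L N M Mh lam xi d_gt0 _ _ _ _ _ mu_sigma_lip _ psi_lip
  N_gt0 M_ge2 cub n x y _.
have cub2 : gauss_cubature 2 lam xi by apply: gauss_cubature_le cub; lia.
have L_ge0 := lipschitz_ge0 d_gt0 psi_lip.
have mu_sigma_lip_x t x' y' a : 0 <= t <= T -> A a ->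
    enorm (mu t x' a - mu t y' a) + fnorm (sigma t x' a - sigma t y' a) <= C0 * enorm (x' - y').
  move=> t_in Aa; have := mu_sigma_lip t t x' y' a t_in t_in Aa.
  by rewrite subrr normr0 sqrtr0 addr0.
apply: le_trans (vhat_rem_lipschitz (ltW T_gt0) L_ge0 cub2
                   mu_sigma_lip_x psi_lip (leq_subr n N) x y) _.
apply: ler_wpM2r; first exact: enorm_ge0.
apply: ler_wpM2l => //.
have ch_ge0 : 0 <= c * (T / N%:R) by rewrite mulr_ge0 // divr_ge0 // ltW.
have r_ge1 : 1 <= Num.sqrt (1 + c * (T / N%:R)) by rewrite -{1}sqrtr1 ler_sqrt; lra.
apply: le_trans (ler_weXn2l r_ge1 (leq_subr n N)) _.
have -> : c * T = c * (T / N%:R) * N%:R by rewrite -mulrA divfK // pnatr_eq0 -lt0n.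
exact: sqrt1D_expn_le_expR.
Qed.
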